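(* Let $\mathbb{F}$ be any field and let $\Phi: M_n(\mathbb{F}) \to M_r(\mathbb{F})$ be a linear map preserving zero products. If $\Phi(I_n)$ is an idempotent, then there exist a nonnegative integer $k$ with $kn\le r$ and a nonsingular $S \in M_r(\mathbb{F})$ such that $$\Phi(I_n)\Phi(A) = \Phi(A)\Phi(I_n) = S\begin{pmatrix} I_k\otimes A & 0\\ 0 & 0_{r-kn}\end{pmatrix}S^{-1}\quad\text{for all } A\in M_n(\mathbb{F});$$ in particular $\Psi_1 := \Phi(I_n)\Phi(\cdot)$ is an algebra homomorphism. Moreover $\Psi_0 := (I_r - \Phi(I_n))\Phi(\cdot)$ is a linear map satisfying $\Psi_0(X)\Psi_0(Y) = 0$ for all $X,Y \in M_n(\mathbb{F})$, and $\Phi = \Psi_1 + \Psi_0$. If $\Phi(I_n) = I_r$, then $\Phi$ is a unital algebra homomorphism of the form $A \mapsto S(I_k\otimes A)S^{-1}$ (with $r = nk$).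
   Context: A map $\Phi$ preserves zero products if $\Phi(A)\Phi(B)=0$ whenever $AB=0$. An algebra homomorphism is a linear multiplicative map. $I_k\otimes A$ denotes the block diagonal matrix $A\oplus\cdots\oplus A$ with $k$ copies of $A$. *)

From HB Require Import structures.
From mathcomp Require Import all_boot all_order all_algebra.
Set Implicit Arguments. Unset Strict Implicit. Unset Printing Implicit Defensive.
Import GRing.Theory.
Local Open Scope ring_scope.

Lemma kron_mod_lt (k n : nat) (i : 'I_(k * n)) : (i %% n < n)%N.
Proof.
case: n i => [|n] [i /= Hi]; last by rewrite ltn_mod.
by rewrite muln0 in Hi.
Qed.

(* I_k (x) A : the k*n x k*n block diagonal matrix diag(A, ..., A), k copies.
   Entry (i, j) is A (i mod n) (j mod n) if i, j lie in the same n-block,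
   and 0 otherwise. *)
Definition kron_id {F : fieldType} (k n : nat) (A : 'M[F]_n) : 'M[F]_(k * n) :=
  \matrix_(i, j) if (i %/ n == j %/ n)%N
                 then A (Ordinal (kron_mod_lt i)) (Ordinal (kron_mod_lt j))
                 else 0.

Definition kron_block {F : fieldType} (k n r : nat) (H : (k * n <= r)%N)
    (A : 'M[F]_n) : 'M[F]_r :=
  castmx (subnKC H, subnKC H)
    (block_mx (kron_id k A) 0 0 (0 : 'M[F]_(r - k * n))).

Definition zero_prod_preserving {F : fieldType} (n r : nat)
    (Phi : 'M[F]_n -> 'M[F]_r) : Prop :=
  forall A B : 'M[F]_n, A *m B = 0 -> Phi A *m Phi B = 0.

Definition alg_hom {F : fieldType} (n r : nat) (Psi : 'M[F]_n -> 'M[F]_r) : Prop :=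
  linear Psi /\ forall A B : 'M[F]_n, Psi (A *m B) = Psi A *m Psi B.

From HB Require Import structures.
From mathcomp Require Import all_boot all_order all_algebra.
Set Implicit Arguments. Unset Strict Implicit. Unset Printing Implicit Defensive.
Import GRing.Theory.
Local Open Scope ring_scope.

(* For an idempotent E the zero products [X (1 - E) . E Y = 0] and
   [X E . (1 - E) Y = 0] give [Phi X Phi (E Y) = Phi (X E) Phi Y]; idempotents
   span M_n, so this holds for every E, whence [Phi A Phi B = Phi (A B) Phi 1].
   Thus P := Phi 1 commutes with the image of Phi, [P Phi] is an algebra
   homomorphism and [(1 - P) Phi X (1 - P) Phi Y = (1 - P) P Phi (X Y) = 0].
   An algebra homomorphism h : M_n -> M_r is conjugate to [I_k (x) A (+) 0]:
   if the rows b_1, ..., b_k are a basis of the image of h(E_11), the rows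
   b_a h(E_1j) are a basis of the image of h(1) on which h acts as I_k (x) A,
   and a basis of the kernel of h(1) completes them to an invertible matrix. *)

Lemma mulmx_comp_linear (F : fieldType) m n p q s (f : 'M[F]_(m, n) -> 'M[F]_(p, q))
    (M : 'M[F]_(s, p)) :
  linear f -> linear (fun A => M *m f A).
Proof. by move=> f_lin a A B; rewrite f_lin mulmxDr scalemxAr. Qed.

Lemma delta_mx_mul (F : fieldType) m n p (i : 'I_m) (j : 'I_n) (A : 'M[F]_(n, p)) :
  delta_mx i j *m A = \sum_l A j l *: delta_mx i l.
Proof.
rewrite -(mul_delta_mx (ord0 : 'I_1)) -mulmxA -rowE (row_sum_delta (row j A)).
rewrite mulmx_sumr; apply: eq_bigr => l _.
by rewrite -scalemxAr (mul_delta_mx (ord0 : 'I_1) i l) mxE.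
Qed.

Lemma eq_linear_delta_mx (F : fieldType) m n p q
    (f g : {linear 'M[F]_(m, n) -> 'M[F]_(p, q)}) :
  (forall i j, f (delta_mx i j) = g (delta_mx i j)) -> f =1 g.
Proof.
move=> fg A; rewrite (matrix_sum_delta A) !linear_sum; apply: eq_bigr => i _.
by rewrite !linear_sum; apply: eq_bigr => j _; rewrite !linearZ fg.
Qed.

(* For i != j, [e_ij = (e_ii + e_ij) - e_ii] is a difference of idempotents. *)
Lemma eq_linear_idempotent (F : fieldType) n p q
    (f g : {linear 'M[F]_n -> 'M[F]_(p, q)}) :
  (forall E, E *m E = E -> f E = g E) -> f =1 g.
Proof.
move=> fg; apply: eq_linear_delta_mx => i j.
have e_ii_idem : delta_mx i i *m delta_mx i i = delta_mx i i :> 'M[F]_n.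
  by rewrite mul_delta_mx.
have [<-|ij] := eqVneq i j; first exact: fg.
have e_iij_idem : let E := delta_mx i i + delta_mx i j : 'M[F]_n in E *m E = E.
  rewrite /= mulmxDl !mulmxDr !mul_delta_mx_cond eqxx eq_sym (negbTE ij).
  by rewrite !mulr1n !mulr0n !addr0.
by have := fg _ e_iij_idem; rewrite !linearD fg //; apply: addrI.
Qed.

Section ZeroProductPreserving.

Variables (F : fieldType) (n r : nat) (Phi : 'M[F]_n -> 'M[F]_r).
Hypotheses (Phi_linear : linear Phi) (Phi_zp : zero_prod_preserving Phi).

HB.instance Definition _ := GRing.isLinear.Build F _ _ _ Phi Phi_linear.

Lemma zero_prod_idempotent_shift E X Y : E *m E = E ->
  Phi X *m Phi (E *m Y) = Phi (X *m E) *m Phi Y.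
Proof.
move=> E_idem.
have /Phi_zp : (X - X *m E) *m (E *m Y) = 0.
  by rewrite mulmxBl !mulmxA -(mulmxA X E E) E_idem subrr.
have /Phi_zp : X *m E *m (Y - E *m Y) = 0.
  by rewrite mulmxBr !mulmxA -(mulmxA X E E) E_idem subrr.
rewrite !(raddfB Phi) mulmxBl mulmxBr => /subr0_eq PhiXE_Y /subr0_eq PhiX_EY.
by rewrite PhiX_EY PhiXE_Y.
Qed.

Lemma zero_prod_shift A X Y : Phi X *m Phi (A *m Y) = Phi (X *m A) *m Phi Y.
Proof.
exact: (eq_linear_idempotent (f := mulmx (Phi X) \o Phi \o mulmxr Y)
  (g := mulmxr (Phi Y) \o Phi \o mulmx X) (fun E => @zero_prod_idempotent_shift E X Y)).
Qed.

Lemma zero_prod_mulmx A B : Phi A *m Phi B = Phi (A *m B) *m Phi 1%:M.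
Proof. by rewrite -{1}[B]mulmx1 zero_prod_shift. Qed.

Lemma zero_prod_commute1 A : Phi 1%:M *m Phi A = Phi A *m Phi 1%:M.
Proof. by rewrite -{1}[A]mulmx1 zero_prod_shift mul1mx. Qed.

Hypothesis Phi1_idem : Phi 1%:M *m Phi 1%:M = Phi 1%:M.

Lemma zero_prod_corner_alg_hom : alg_hom (fun A => Phi 1%:M *m Phi A).
Proof.
split=> [|A B]; first exact: mulmx_comp_linear.
rewrite -mulmxA (mulmxA (Phi A)) -zero_prod_commute1 !mulmxA Phi1_idem.
by rewrite -mulmxA [Phi A *m _]zero_prod_mulmx -zero_prod_commute1 mulmxA Phi1_idem.
Qed.

Lemma zero_prod_off_corner_mul0 X Y :
  (1%:M - Phi 1%:M) *m Phi X *m ((1%:M - Phi 1%:M) *m Phi Y) = 0.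
Proof.
set Q := 1%:M - Phi 1%:M.
have Q_commute A : Phi A *m Q = Q *m Phi A.
  by rewrite mulmxBr mulmxBl mulmx1 mul1mx zero_prod_commute1.
have QP0 : Q *m Phi 1%:M = 0 by rewrite mulmxBl mul1mx Phi1_idem subrr.
rewrite -mulmxA (mulmxA (Phi X)) Q_commute -!mulmxA [Phi X *m _]zero_prod_mulmx.
by rewrite -zero_prod_commute1 (mulmxA Q (Phi 1%:M)) QP0 mul0mx mulmx0.
Qed.

End ZeroProductPreserving.

Section KronIndex.

Variables k n : nat.

Lemma kron_div_lt (i : 'I_(k * n)) : (i %/ n < k)%N.
Proof.
case: n i => [|n'] [i /= lt_i]; first by rewrite muln0 in lt_i.
by rewrite ltn_divLR.
Qed.

Definition ord_divn (i : 'I_(k * n)) : 'I_k := Ordinal (kron_div_lt i).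
Definition ord_modn (i : 'I_(k * n)) : 'I_n := Ordinal (kron_mod_lt i).

Lemma ord_kron_lt (a : 'I_k) (j : 'I_n) : (a * n + j < k * n)%N.
Proof.
apply: (@leq_trans (a.+1 * n)); first by rewrite mulSn addnC ltn_add2r.
by rewrite leq_mul2r ltn_ord orbT.
Qed.

Definition ord_kron (a : 'I_k) (j : 'I_n) : 'I_(k * n) := Ordinal (ord_kron_lt a j).

Lemma ord_divn_kron a j : ord_divn (ord_kron a j) = a.
Proof.
apply: val_inj => /=; have n_gt0 : (0 < n)%N by case: j; case: (n).
by rewrite divnMDl // divn_small ?addn0.
Qed.

Lemma ord_modn_kron a j : ord_modn (ord_kron a j) = j.
Proof. by apply: val_inj => /=; rewrite modnMDl modn_small. Qed.

Lemma ord_kron_surj (i : 'I_(k * n)) : exists a j, i = ord_kron a j.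
Proof. by exists (ord_divn i), (ord_modn i); apply: val_inj => /=; rewrite -divn_eq. Qed.

Lemma eq_ord_kron a j b l : (ord_kron a j == ord_kron b l) = (a == b) && (j == l).
Proof.
apply/eqP/andP => [eq_ajbl | [/eqP-> /eqP->] //].
by split; apply/eqP;
  [rewrite -(ord_divn_kron a j) eq_ajbl ord_divn_kron
  |rewrite -(ord_modn_kron a j) eq_ajbl ord_modn_kron].
Qed.

Lemma big_ord_kron (V : nmodType) (G : 'I_(k * n) -> V) :
  \sum_i G i = \sum_(a < k) \sum_(j < n) G (ord_kron a j).
Proof.
rewrite pair_bigA /=.
rewrite (reindex (fun aj : 'I_k * 'I_n => ord_kron aj.1 aj.2)) //=.
exists (fun i => (ord_divn i, ord_modn i)) => [[a j] _ | i _] /=.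
  by rewrite ord_divn_kron ord_modn_kron.
by have [a [j ->]] := ord_kron_surj i; rewrite ord_divn_kron ord_modn_kron.
Qed.

End KronIndex.

Section KronId.

Variables (F : fieldType) (k n : nat).

Lemma kron_idE (A : 'M[F]_n) i i' :
  kron_id k A i i' = if ord_divn i == ord_divn i' then A (ord_modn i) (ord_modn i') else 0.
Proof. by rewrite mxE. Qed.

Lemma kron_id_ord_kron (A : 'M[F]_n) a j b l :
  kron_id k A (ord_kron a j) (ord_kron b l) = A j l *+ (a == b).
Proof. by rewrite kron_idE !ord_divn_kron !ord_modn_kron; case: eqP. Qed.

Lemma row_kron_id_mul p (A : 'M[F]_n) (M : 'M[F]_(k * n, p)) a j :
  row (ord_kron a j) (kron_id k A *m M) = \sum_l A j l *: row (ord_kron a l) M.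
Proof.
apply/rowP => c; rewrite !mxE summxE big_ord_kron (bigD1 a) //=.
rewrite [X in _ + X]big1 => [|b /negbTE ba]; last first.
  by apply: big1 => l _; rewrite kron_id_ord_kron eq_sym ba mulr0n mul0r.
by rewrite addr0; apply: eq_bigr => l _; rewrite kron_id_ord_kron eqxx mulr1n !mxE.
Qed.

End KronId.

Lemma castmx_intertwine (F : fieldType) p q r (e : p = q) (T : 'M[F]_(p, r))
    (K : 'M[F]_p) (M : 'M[F]_r) :
  T *m M = K *m T -> castmx (e, erefl r) T *m M = castmx (e, e) K *m castmx (e, erefl r) T.
Proof. by case: q / e; rewrite !castmx_id. Qed.

Lemma idempotent_adds_kermx (F : fieldType) r (P : 'M[F]_r) :
  P *m P = P -> (P + kermx P :=: 1%:M)%MS.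
Proof.
move=> P_idem; apply/eqmxP; rewrite submx1 -(subrK P 1%:M) addrC.
by apply: addmx_sub_adds => //; rewrite sub_kermx mulmxBl mul1mx P_idem subrr.
Qed.

Section IdempotentFrame.

Variables (F : fieldType) (m r : nat) (P : 'M[F]_r) (T : 'M[F]_(m, r)).
Hypotheses (P_idem : P *m P = P) (T_free : row_free T) (T_eqP : (T :=: P)%MS).

Lemma idempotent_frame_conj (m_le_r : (m <= r)%N) :
  exists2 S : 'M[F]_r, S \in unitmx &
    forall (K : 'M[F]_m) (M : 'M[F]_r), P *m M = M -> T *m M = K *m T ->
      M = S *m castmx (subnKC m_le_r, subnKC m_le_r)
                 (block_mx K 0 0 (0 : 'M[F]_(r - m))) *m invmx S.
Proof.
have rank_P : \rank P = m by rewrite -T_eqP; apply/eqP.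
have rank_ker : \rank (kermx P) = (r - m)%N by rewrite mxrank_ker rank_P.
pose Z := castmx (rank_ker, erefl r) (row_base (kermx P)).
have ZP : Z *m P = 0 by apply/sub_kermxP; rewrite eqmx_cast eq_row_base.
pose S := castmx (subnKC m_le_r, erefl r) (col_mx T Z).
have S_unit : S \in unitmx.
  rewrite -row_full_unit -sub1mx eqmx_cast -addsmxE -(idempotent_adds_kermx P_idem).
  by apply: addsmxS; rewrite ?T_eqP // eqmx_cast eq_row_base.
exists (invmx S) => [|K M PM TM]; first by rewrite unitmx_inv.
have TZM : col_mx T Z *m M = block_mx K 0 0 (0 : 'M[F]_(r - m)) *m col_mx T Z.
  rewrite mul_col_mx mul_block_col !mul0mx !addr0 TM.
  by rewrite -PM mulmxA ZP mul0mx.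
by rewrite invmxK -mulmxA -(castmx_intertwine _ TZM) mulKmx.
Qed.

End IdempotentFrame.

Section AlgHomStructure.

Variables (F : fieldType) (n r : nat) (h : 'M[F]_n.+1 -> 'M[F]_r).
Hypotheses (h_linear : linear h) (h_mul : forall A B, h (A *m B) = h A *m h B).

HB.instance Definition _ := GRing.isLinear.Build F _ _ _ h h_linear.

Local Notation P := (h 1%:M).
Local Notation k := (\rank (h (delta_mx 0 0))).
Local Notation B := (row_base (h (delta_mx 0 0))).

Lemma alg_hom_delta_mx i j p q :
  h (delta_mx i j) *m h (delta_mx p q) = h (delta_mx i q) *+ (j == p).
Proof. by rewrite -h_mul mul_delta_mx_cond; case: eqP; rewrite ?linear0. Qed.

Lemma base_mul_delta00 : B *m h (delta_mx 0 0) = B.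
Proof.
have /submxP [X ->] : (B <= h (delta_mx 0 0))%MS by rewrite eq_row_base.
by rewrite -mulmxA alg_hom_delta_mx eqxx mulr1n.
Qed.

Definition alg_hom_frame : 'M[F]_(k * n.+1, r) :=
  \matrix_(i, c) (B *m h (delta_mx 0 (ord_modn i))) (ord_divn i) c.

Lemma alg_hom_frameE a j c :
  alg_hom_frame (ord_kron a j) c = (B *m h (delta_mx 0 j)) a c.
Proof. by rewrite mxE ord_divn_kron ord_modn_kron. Qed.

Lemma row_alg_hom_frame a j :
  row (ord_kron a j) alg_hom_frame = row a (B *m h (delta_mx 0 j)).
Proof. by apply/rowP => c; rewrite !mxE ord_divn_kron ord_modn_kron. Qed.

Lemma alg_hom_frame_free : row_free alg_hom_frame.
Proof.
have [Binv B_Binv] : exists Binv, B *m Binv = 1%:M.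
  by apply/row_freeP; exact: row_base_free.
apply/row_freeP.
exists (\matrix_(c, i) (h (delta_mx (ord_modn i) 0) *m Binv) c (ord_divn i)).
apply/matrixP => i i'; have [a [j ->]] := ord_kron_surj i.
have [b [l ->]] := ord_kron_surj i'.
transitivity ((B *m h (delta_mx 0 j) *m (h (delta_mx l 0) *m Binv)) a b).
  rewrite !mxE; apply: eq_bigr => c _.
  by rewrite alg_hom_frameE !mxE ord_divn_kron ord_modn_kron.
rewrite mulmxA -(mulmxA B) alg_hom_delta_mx [RHS]mxE eq_ord_kron.
case: eqP => _; last by rewrite andbF !mulr0n mulmx0 mul0mx mxE.
by rewrite andbT mulr1n base_mul_delta00 B_Binv mxE.
Qed.

Lemma alg_hom_frame_eqmx : (alg_hom_frame :=: P)%MS.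
Proof.
apply/eqmxP/andP; split.
  have -> : alg_hom_frame = alg_hom_frame *m P.
    apply/row_matrixP => i; have [a [j ->]] := ord_kron_surj i.
    by rewrite row_mul row_alg_hom_frame -row_mul -mulmxA -h_mul mulmx1.
  exact: submxMl.
rewrite mx1_sum_delta linear_sum; apply/summx_sub => i _ /=.
have -> : h (delta_mx i i) = h (delta_mx i 0) *m h (delta_mx 0 0) *m h (delta_mx 0 i).
  by rewrite -!h_mul !mul_delta_mx.
have /submxP [X ->] : (h (delta_mx i 0) *m h (delta_mx 0 0) <= B)%MS.
  by rewrite eq_row_base submxMl.
rewrite -mulmxA; apply: submx_trans (submxMl _ _) _.
apply/row_subP => a; rewrite -row_alg_hom_frame; exact: row_sub.
Qed.

Lemma alg_hom_frame_intertwine A :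
  alg_hom_frame *m h A = kron_id k A *m alg_hom_frame.
Proof.
apply/row_matrixP => i; have [a [j ->]] := ord_kron_surj i.
rewrite row_kron_id_mul row_mul row_alg_hom_frame -row_mul -mulmxA -h_mul.
rewrite delta_mx_mul linear_sum mulmx_sumr linear_sum; apply: eq_bigr => l _ /=.
by rewrite linearZ -scalemxAr linearZ row_alg_hom_frame.
Qed.

Lemma alg_hom_conj_kron_block_succ :
  exists k (k_le_r : (k * n.+1 <= r)%N) (S : 'M[F]_r), S \in unitmx /\
    \rank (h 1%:M) = (k * n.+1)%N /\ forall A, h A = S *m kron_block k_le_r A *m invmx S.
Proof.
have k_le_r : (k * n.+1 <= r)%N by rewrite -(eqP alg_hom_frame_free) rank_leq_col.
have P_idem : P *m P = P by rewrite -h_mul mulmx1.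
have [S S_unit S_conj] :=
  idempotent_frame_conj P_idem alg_hom_frame_free alg_hom_frame_eqmx k_le_r.
exists k, k_le_r, S; split=> //; split.
  by rewrite -alg_hom_frame_eqmx; apply/eqP; exact: alg_hom_frame_free.
move=> A; apply: S_conj; first by rewrite -h_mul mul1mx.
exact: alg_hom_frame_intertwine.
Qed.

End AlgHomStructure.

Lemma alg_hom_conj_kron_block (F : fieldType) n r (h : 'M[F]_n -> 'M[F]_r) :
  alg_hom h ->
  exists k (k_le_r : (k * n <= r)%N) (S : 'M[F]_r), S \in unitmx /\
    \rank (h 1%:M) = (k * n)%N /\ forall A, h A = S *m kron_block k_le_r A *m invmx S.
Proof.
case: n h => [|n] h [h_linear h_mul]; last exact: alg_hom_conj_kron_block_succ.
have h0 A : h A = 0.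
  by rewrite flatmx0; have := h_linear (-1) 0 0; rewrite scaler0 addr0 scaleN1r addNr.
exists 0%N, (leq0n r), 1%:M; split; first exact: unitmx1.
split=> [|A]; first by rewrite h0 mxrank0.
rewrite h0 mul1mx invmx1 mulmx1 /kron_block [kron_id _ _]flatmx0 block_mx0.
by apply/matrixP => i j; rewrite castmxE !mxE.
Qed.

Theorem corollary3p4 (F : fieldType) (n r : nat) (Phi : 'M[F]_n -> 'M[F]_r)
  (Hlin : linear Phi) (Hzp : zero_prod_preserving Phi)
  (Hidem : Phi 1%:M *m Phi 1%:M = Phi 1%:M) :
  let Psi1 := fun A : 'M[F]_n => Phi 1%:M *m Phi A in
  let Psi0 := fun A : 'M[F]_n => (1%:M - Phi 1%:M) *m Phi A in
  (exists (k : nat) (Hk : (k * n <= r)%N) (S : 'M[F]_r),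
     S \in unitmx /\
     (forall A : 'M[F]_n,
        Phi 1%:M *m Phi A = S *m kron_block Hk A *m invmx S /\
        Phi A *m Phi 1%:M = S *m kron_block Hk A *m invmx S) /\
     (Phi 1%:M = 1%:M ->
        (k * n)%N = r /\
        (forall A : 'M[F]_n, Phi A = S *m kron_block Hk A *m invmx S) /\
        alg_hom Phi)) /\
  alg_hom Psi1 /\
  linear Psi0 /\
  (forall X Y : 'M[F]_n, Psi0 X *m Psi0 Y = 0) /\
  (forall A : 'M[F]_n, Phi A = Psi1 A + Psi0 A).
Proof.
move=> Psi1 Psi0.
have comm1 := zero_prod_commute1 Hlin Hzp.
have Psi1_hom : alg_hom Psi1 := zero_prod_corner_alg_hom Hlin Hzp Hidem.
have [k [k_le_r [S [S_unit [rank_Psi1 Psi1_conj]]]]] := alg_hom_conj_kron_block Psi1_hom.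
split.
  exists k, k_le_r, S; split=> //; split=> [A|Phi1].
    by rewrite -comm1 -Psi1_conj.
  have PhiE A : Phi A = Psi1 A by rewrite /Psi1 Phi1 mul1mx.
  split; first by rewrite -rank_Psi1 /Psi1 Hidem Phi1 mxrank1.
  split=> [A|]; first by rewrite PhiE.
  by split=> // A B; rewrite (zero_prod_mulmx Hlin Hzp) Phi1 mulmx1.
split=> //; split; first exact: mulmx_comp_linear.
split; first exact: zero_prod_off_corner_mul0.
by move=> A; rewrite /Psi1 /Psi0 -mulmxDl addrC subrK mul1mx.
Qed.
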